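(* The ideals $I_2(\mathbf T_{\lambda-\mu})$ and $I_2(\mathbf S_{\lambda-\mu})$ are prime ideals of $K[\mathbf T_{\lambda-\mu}]$.
   Context: Let $K$ be a field. Fix an integer $n\ge1$, a partition $\lambda=(\lambda_1,\dots,\lambda_n)$ of positive integers with $m:=\lambda_1\ge\lambda_2\ge\cdots\ge\lambda_n$, and an integer vector $\mu=(\mu_1,\dots,\mu_n)$ with $0\le\mu_1\le\cdots\le\mu_n<\lambda_n$ and $\mu_i\ge i-1$ for all $i$. The tableau $\mathbf T_{\lambda-\mu}$ is the set of positions $\{(i,j):1\le i\le n,\ \mu_i<j\le\lambda_i\}$ in an $m\times m$ array, and $K[\mathbf T_{\lambda-\mu}]$ is the polynomial ring over $K$ in the variables $T_{ij}$, $(i,j)\in\mathbf T_{\lambda-\mu}$; the entry of $\mathbf T_{\lambda-\mu}$ at $(i,j)$ is $T_{ij}$. The symmetrized tableau $\mathbf S_{\lambda-\mu}$ is the partially filled $m\times m$ array with set of positions $\{(i,j):(i,j)\in\mathbf T_{\lambda-\mu}\text{ or }(j,i)\in\mathbf T_{\lambda-\mu}\}$, whose entry at $(i,j)$ is $T_{ij}$ if $(i,j)\in\mathbf T_{\lambda-\mu}$ and $T_{ji}$ otherwise. For such an array $A$ with set of positions $P$ and entries $a_{ij}$, a 2-minor of $A$ is a polynomial $a_{ij}a_{kl}-a_{il}a_{kj}$ with $i<k$, $j<l$ and $(i,j),(i,l),(k,j),(k,l)\in P$. $I_2(\mathbf T_{\lambda-\mu})$ and $I_2(\mathbf S_{\lambda-\mu})$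 denote the ideals of $K[\mathbf T_{\lambda-\mu}]$ generated by the 2-minors of $\mathbf T_{\lambda-\mu}$ and of $\mathbf S_{\lambda-\mu}$. *)

From HB Require Import structures.
From mathcomp Require Import all_boot all_order all_algebra.
Set Implicit Arguments. Unset Strict Implicit. Unset Printing Implicit Defensive.
Import GRing.Theory.
Local Open Scope ring_scope.

(* Multivariate polynomial ring R[x_0, ..., x_{N-1}] realised as the iterated
   univariate polynomial ring R[x_0][x_1]...[x_{N-1}]. *)
Fixpoint mpoly (R : comNzRingType) (N : nat) : comNzRingType :=
  match N with
  | 0 => R
  | N'.+1 => {poly (mpoly R N')}
  end.

(* The variable x_k of mpoly R N (k < N); 0 for out-of-range k (never used). *)
Fixpoint mvar (R : comNzRingType) (N : nat) : nat -> mpoly R N :=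
  match N return nat -> mpoly R N with
  | 0 => fun _ => 0
  | N'.+1 => fun k => if k == N' then 'X else (mvar R N' k)%:P
  end.

(* 1-based access to the entries lambda_i, mu_i of a sequence. *)
Definition at1 (s : seq nat) (i : nat) : nat := nth 0%N s i.-1.

Definition inT (lam mu : seq nat) (i j : nat) : bool :=
  (1 <= i <= size lam)%N && (at1 mu i < j <= at1 lam i)%N.

(* Positions of T_{lambda-mu}, in row-major order; they index the variables. *)
Definition Tlist (lam mu : seq nat) : seq (nat * nat) :=
  [seq (i, j) | i <- iota 1 (size lam),
                j <- iota (at1 mu i).+1 (at1 lam i - at1 mu i)].

Definition KT (K : fieldType) (lam mu : seq nat) : comNzRingType :=
  mpoly K (size (Tlist lam mu)).

Definition Tvar (K : fieldType) (lam mu : seq nat) (i j : nat) : KT K lam mu :=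
  mvar K (size (Tlist lam mu)) (index (i, j) (Tlist lam mu)).

Definition inS (lam mu : seq nat) (i j : nat) : bool :=
  inT lam mu i j || inT lam mu j i.

Definition Sentry (K : fieldType) (lam mu : seq nat) (i j : nat) : KT K lam mu :=
  if inT lam mu i j then Tvar K lam mu i j else Tvar K lam mu j i.

Definition is_2minor (R : comNzRingType) (m : nat) (P : nat -> nat -> bool)
    (a : nat -> nat -> R) (f : R) : Prop :=
  exists i k j l : nat,
    [/\ (1 <= i)%N, (i < k <= m)%N, (1 <= j)%N, (j < l <= m)%N &
        [&& P i j, P i l, P k j & P k l]] /\
    f = a i j * a k l - a i l * a k j.

Definition ideal_gen (R : comNzRingType) (G : R -> Prop) (f : R) : Prop :=
  exists s : seq (R * R),
    (forall x, x \in s -> G x.2) /\ f = \sum_(x <- s) x.1 * x.2.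

(* Prime ideal (I is assumed to be an ideal): proper and prime. *)
Definition prime_ideal (R : comNzRingType) (I : R -> Prop) : Prop :=
  ~ I 1 /\ forall f g : R, I (f * g) -> I f \/ I g.

Definition I2T (K : fieldType) (lam mu : seq nat) : KT K lam mu -> Prop :=
  ideal_gen (is_2minor (at1 lam 1) (inT lam mu) (Tvar K lam mu)).

Definition I2S (K : fieldType) (lam mu : seq nat) : KT K lam mu -> Prop :=
  ideal_gen (is_2minor (at1 lam 1) (inS lam mu) (Sentry K lam mu)).

Arguments I2T K lam mu _ : clear implicits.
Arguments I2S K lam mu _ : clear implicits.

(* Both ideals are kernels of monomial maps into a polynomial ring, hence prime:
   T_ij |-> x_i y_j for I_2(T) and T_ij |-> x_i x_j for I_2(S).  The 2-minors are in
   the kernels.  Conversely, the kernel of a monomial map is spanned by the binomials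
   whose two monomials have the same image, and each such binomial lies in the ideal.
   For T, two monomials with the same row and column multisets are connected by
   2-minors, because the rows of the tableau are nested intervals.  For S, the
   symmetric 2-minors T_ab T_cd - T_ac T_bd (b < c) first move every monomial to one
   whose row indices all lie below its column indices, which reduces to the case of T. *)

From Pilot Require Import Defs.
From HB Require Import structures.
From mathcomp Require Import all_boot all_order all_algebra.
From mathcomp Require Import zify ring.
Set Implicit Arguments. Unset Strict Implicit. Unset Printing Implicit Defensive.
Import GRing.Theory.
Local Open Scope ring_scope.

Section MultivariatePolynomials.
Variable R : comNzRingType.

Fixpoint mpolyC (N : nat) : {rmorphism R -> mpoly R N} :=
  match N return {rmorphism R -> mpoly R N} with
  | 0 => idfun
  | N'.+1 => (polyC \o mpolyC N')%FUN
  end.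

(* A monomial is encoded by the list [w] of the indices of its variables, with repetitions. *)
Definition mmono N (w : seq nat) : mpoly R N := \prod_(k <- w) mvar R N k.

Definition bounded N (w : seq nat) := all (fun k => k < N)%N w.

Lemma mvarS N k : (k < N)%N -> mvar R N.+1 k = (mvar R N k)%:P.
Proof. by move=> kN /=; rewrite ifF // ltn_eqF. Qed.

Lemma mmonoS N w : bounded N w -> mmono N.+1 w = (mmono N w)%:P.
Proof.
elim: w => [|k w IH] /=; first by rewrite /mmono !big_nil.
by move=> /andP[kN bw]; rewrite /mmono !big_cons -/(mmono _ _) IH // mvarS // polyCM.
Qed.

Lemma mmono_nseq N n : mmono N.+1 (nseq n N) = 'X^n.
Proof.
elim: n => [|n IH]; first by rewrite /mmono big_nil expr0.
by rewrite /mmono /= big_cons -/(mmono N.+1 (nseq n N)) IH /= eqxx exprS.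
Qed.

Lemma mmono_cat N w1 w2 : mmono N (w1 ++ w2) = mmono N w1 * mmono N w2.
Proof. by rewrite /mmono big_cat. Qed.

Lemma mmono_perm N w1 w2 : perm_eq w1 w2 -> mmono N w1 = mmono N w2.
Proof. by move=> h; rewrite /mmono (perm_big _ h). Qed.

Lemma mmono_splitX N w : mmono N.+1 w =
  mmono N.+1 (filter (predC (pred1 N)) w) * 'X^(count_mem N w).
Proof.
rewrite -mmono_nseq -mmono_cat; apply: mmono_perm.
suff -> : nseq (count_mem N w) N = filter (pred1 N) w by rewrite perm_sym perm_catC perm_filterC.
by elim: w => //= y w IH; case: eqP => [->|] //=; rewrite IH.
Qed.

Definition monomial_sum N (s : seq (R * seq nat)) : mpoly R N :=
  \sum_(x <- s) mpolyC N x.1 * mmono N x.2.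

Lemma mpoly_monomial_expansion N (p : mpoly R N) :
  exists2 s : seq (R * seq nat), all (fun x => bounded N x.2) s & p = monomial_sum N s.
Proof.
elim: N p => [|N IH] p.
  by exists [:: (p, [::])]; rewrite // /monomial_sum big_seq1 /mmono big_nil mulr1.
have -> : p = \sum_(i < size p) (p`_i)%:P * 'X^i.
  by rewrite -{1}(coefK p) poly_def; apply: eq_bigr => i _; rewrite mul_polyC.
apply: (big_ind (fun q : mpoly R N.+1 => exists2 s : seq (R * seq nat),
  all (fun x => bounded N.+1 x.2) s & q = monomial_sum N.+1 s)).
- by exists [::]; rewrite // /monomial_sum big_nil.
- move=> _ _ [s1 b1 ->] [s2 b2 ->].
  by exists (s1 ++ s2); rewrite ?all_cat ?b1 // /monomial_sum big_cat.
move=> i _; have [s bs ->] := IH p`_i.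
exists [seq (x.1, x.2 ++ nseq i N) | x <- s].
  rewrite all_map; apply: sub_all bs => x /= bx; rewrite /bounded all_cat.
  rewrite (sub_all _ bx) => [|k /ltnW]; last by rewrite ltnS.
  by apply/allP => k /nseqP[-> _].
rewrite /monomial_sum big_map rmorph_sum /= mulr_suml; apply: eq_big_seq => x xs.
by rewrite mmono_cat mmonoS ?(allP bs) // mmono_nseq polyCM mulrA.
Qed.

Fixpoint mcoef (N : nat) (e : nat -> nat) : mpoly R N -> R :=
  match N return mpoly R N -> R with
  | 0 => fun c => c
  | N'.+1 => fun p => mcoef e p`_(e N')
  end.

Lemma mcoef0 N e : mcoef e (0 : mpoly R N) = 0.
Proof. by elim: N => //= N IH; rewrite coef0 IH. Qed.

Lemma mcoefD N e (p q : mpoly R N) : mcoef e (p + q) = mcoef e p + mcoef e q.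
Proof. by elim: N p q => //= N IH p q; rewrite coefD IH. Qed.

Lemma mcoef_sum N e I (s : seq I) (F : I -> mpoly R N) :
  mcoef e (\sum_(x <- s) F x) = \sum_(x <- s) mcoef e (F x).
Proof.
elim: s => [|x s IH]; first by rewrite !big_nil mcoef0.
by rewrite !big_cons mcoefD IH.
Qed.

Lemma mcoef_monomial N e c w : bounded N w ->
  mcoef e (mpolyC N c * mmono N w) =
  if all (fun k => e k == count_mem k w) (iota 0 N) then c else 0.
Proof.
elim: N c w => [|N IH] c w.
  by case: w => //= _; rewrite /mmono big_nil mulr1.
move=> bw; set w' := filter (predC (pred1 N)) w.
have bw' : bounded N w'.
  rewrite /bounded all_filter; apply/allP => k kw /=; apply/implyP => kN.
  by move/allP: bw => /(_ k kw); rewrite ltnS leq_eqVlt (negPf kN).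
have -> : mpolyC N.+1 c = (mpolyC N c)%:P by [].
have -> : iota 0 N.+1 = iota 0 N ++ [:: N] by rewrite -addn1 iotaD.
rewrite all_cat /= andbT mmono_splitX mmonoS // mulrA -polyCM /= coefMXn.
have -> : all (fun k => e k == count_mem k w) (iota 0 N) =
          all (fun k => e k == count_mem k w') (iota 0 N).
  apply: eq_in_all => k; rewrite mem_iota add0n /= => kN.
  rewrite count_filter; congr (_ == _); apply: eq_count => x /=.
  by case: eqP => //= ->; rewrite (ltn_eqF kN).
case: ltnP => hlt; first by rewrite mcoef0 (ltn_eqF hlt) andbF.
rewrite coefC subn_eq0; case: (leqP (e N) (count_mem N w)) => h2 /=.
  by rewrite eqn_leq h2 hlt !andbT IH.
by rewrite mcoef0 (gtn_eqF h2) andbF.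
Qed.

Section Evaluation.
Variables (M : nat) (v : nat -> mpoly R M).

Fixpoint meval (N : nat) : {rmorphism mpoly R N -> mpoly R M} :=
  match N return {rmorphism mpoly R N -> mpoly R M} with
  | 0 => mpolyC M
  | N'.+1 => horner_morph (fun x : mpoly R N' => mulrC (v N') (meval N' x))
  end.

Lemma meval_C N c : meval N (mpolyC N c) = mpolyC M c.
Proof. by elim: N => //= N IH; rewrite horner_morphC IH. Qed.

Lemma meval_var N k : (k < N)%N -> meval N (mvar R N k) = v k.
Proof.
elim: N => // N IH; rewrite ltnS leq_eqVlt => /orP[/eqP->|kN] /=.
  by rewrite eqxx horner_morphX.
by rewrite (ltn_eqF kN) horner_morphC IH.
Qed.

Lemma meval_mmono N w : bounded N w -> meval N (mmono N w) = \prod_(k <- w) v k.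
Proof.
elim: w => [|k w IH] /=; first by rewrite /mmono !big_nil rmorph1.
by move=> /andP[kN bw]; rewrite /mmono !big_cons rmorphM -/(mmono _ _) IH // meval_var.
Qed.

End Evaluation.

Lemma meval_mmono_flatten M N (img : nat -> seq nat) w : bounded N w ->
  meval (fun k => mmono M (img k)) N (mmono N w) = mmono M (flatten (map img w)).
Proof.
move=> bw; rewrite meval_mmono //; elim: w {bw} => [|k w IH] /=.
  by rewrite big_nil /mmono big_nil.
by rewrite big_cons IH mmono_cat.
Qed.
End MultivariatePolynomials.

Lemma mpoly_mul_eq0 (R : idomainType) N (p q : mpoly R N) : p * q = 0 -> p = 0 \/ q = 0.
Proof.
elim: N p q => [|N IH] p q /=.
  by move/eqP; rewrite mulf_eq0 => /orP[/eqP->|/eqP->]; [left|right].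
move=> pq0; case: (eqVneq p 0) => [->|p0]; first by left.
case: (eqVneq q 0) => [->|q0]; first by right.
have hl : lead_coef p * lead_coef q != 0.
  by apply/eqP => /IH [] /eqP; rewrite lead_coef_eq0; apply/negP.
by move: (lead_coef_proper_mul hl); rewrite pq0 lead_coef0 => h; move: hl; rewrite -h eqxx.
Qed.

Section IdealGen.
Variables (R : comNzRingType) (G : R -> Prop).

Lemma ideal_gen0 : ideal_gen G 0.
Proof. by exists [::]; split => //; rewrite big_nil. Qed.

Lemma ideal_genD a b : ideal_gen G a -> ideal_gen G b -> ideal_gen G (a + b).
Proof.
move=> [s1 [h1 ->]] [s2 [h2 ->]]; exists (s1 ++ s2); split; last by rewrite big_cat.
by move=> x; rewrite mem_cat => /orP[/h1|/h2].
Qed.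

Lemma ideal_genMl r a : ideal_gen G a -> ideal_gen G (r * a).
Proof.
move=> [s [h ->]]; exists [seq (r * x.1, x.2) | x <- s]; split.
  by move=> x /mapP[y ys ->]; exact: h ys.
by rewrite big_map mulr_sumr; apply: eq_bigr => x _; rewrite mulrA.
Qed.

Lemma ideal_gen_mem a : G a -> ideal_gen G a.
Proof.
move=> h; exists [:: (1, a)]; split; last by rewrite big_seq1 mul1r.
by move=> x; rewrite inE => /eqP->.
Qed.

End IdealGen.

Lemma prime_ideal_kernel (K : fieldType) N M (J : mpoly K N -> Prop)
    (phi : {rmorphism mpoly K N -> mpoly K M}) :
  (forall p, J p <-> phi p = 0) -> prime_ideal J.
Proof.
move=> kerJ; split; first by move/kerJ; rewrite rmorph1 => /eqP; rewrite oner_eq0.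
by move=> f g /kerJ; rewrite rmorphM => /mpoly_mul_eq0 [] /kerJ; [left|right].
Qed.

Section BinomialIdeal.
Variables (R : comNzRingType) (J : R -> Prop).
Hypotheses (J0 : J 0) (JD : forall a b, J a -> J b -> J (a + b))
  (JMl : forall r a, J a -> J (r * a)).

Lemma idealN a : J a -> J (- a).
Proof. by move=> h; rewrite -mulN1r; apply: JMl. Qed.

Lemma ideal_sub_trans a b c : J (a - b) -> J (b - c) -> J (a - c).
Proof. by move=> hab hbc; rewrite -[a](subrK b) -addrA; apply: JD. Qed.

Lemma ideal_sub_mul a b c : J (b - c) -> J (a * b - a * c).
Proof. by rewrite -mulrBr; apply: JMl. Qed.

Section Classes.
Variables (S : comNzRingType) (f : {rmorphism S -> R}) (T U : eqType).
Variables (key : T -> U) (mon : T -> R) (Q : pred T).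
Hypothesis binomial_in : forall w w', Q w -> Q w' -> key w = key w' -> J (mon w - mon w').

(* Pair a term with another term of its class, merging their coefficients at the cost
   of a binomial, and induct on the number of terms. *)
Lemma lincomb_in_binomial_ideal (s : seq (S * T)) : all (fun x => Q x.2) s ->
  (forall b, \sum_(x <- s | key x.2 == b) x.1 = 0) ->
  J (\sum_(x <- s) f x.1 * mon x.2).
Proof.
move: {2}(size s) (leqnn (size s)) => n; elim: n s => [|n IH] [|[c w] s] //=;
  try by rewrite big_nil.
rewrite ltnS => hsz /andP[qw qs] hb; rewrite big_cons /=.
have [hh|hh] := boolP (has (fun x : S * T => key x.2 == key w) s); last first.
  have c0 : c = 0.
    by have := hb (key w); rewrite big_cons /= eqxx big_hasC ?addr0.
  rewrite c0 rmorph0 mul0r add0r; apply: IH => // b.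
  by have := hb b; rewrite big_cons /=; case: eqP => [<-|_] //; rewrite big_hasC.
set y := nth (c, w) s (find (fun x : S * T => key x.2 == key w) s).
have ys : y \in s by rewrite mem_nth // -has_find.
have ky : key y.2 = key w by apply/eqP; exact: (nth_find (c, w) hh).
rewrite (big_rem _ ys) /=.
have -> : f c * mon w + (f y.1 * mon y.2 + \sum_(z <- rem y s) f z.1 * mon z.2) =
    f c * (mon w - mon y.2) + \sum_(z <- (c + y.1, y.2) :: rem y s) f z.1 * mon z.2.
  by rewrite big_cons /= rmorphD mulrBr mulrDl !addrA subrK.
apply: JD; first by apply: JMl; apply: binomial_in => //; exact: (allP qs).
apply: IH.
- have s0 : (0 < size s)%N by case: (s) ys.
  by rewrite /= size_rem // prednK.
- by rewrite /= (allP qs _ ys); apply/allP => z /mem_rem; exact: (allP qs).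
move=> b; have := hb b; rewrite big_cons /= (big_rem _ ys) /= big_cons /= ky.
by case: (key w == b); rewrite ?addrA ?add0r.
Qed.

End Classes.
End BinomialIdeal.

Lemma all_count_iota_perm M (s t : seq nat) : bounded M s -> bounded M t ->
  all (fun k => count_mem k s == count_mem k t) (iota 0 M) = perm_eq s t.
Proof.
move=> hs ht; apply/idP/idP; last by move/permP => h; apply/allP => k _; rewrite h.
move/allP => h; apply/allP => x; rewrite mem_cat => hx /=.
apply: h; rewrite mem_iota add0n /=.
by case/orP: hx => hx; [exact: (allP hs) | exact: (allP ht)].
Qed.

(* The coefficients of a kernel element sum to zero on each fibre of [beta], as is
   seen by extracting the coefficient of each image monomial. *)
Section MonomialMapKernel.
Variables (R : comNzRingType) (N M : nat) (v : nat -> mpoly R M).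
Variable beta : seq nat -> seq nat.
Hypothesis meval_mmono_beta :
  forall w, bounded N w -> meval v N (mmono R N w) = mmono R M (beta w).
Hypothesis bounded_beta : forall w, bounded N w -> bounded M (beta w).
Variable J : mpoly R N -> Prop.
Hypotheses (J0 : J 0) (JD : forall a b, J a -> J b -> J (a + b))
  (JMl : forall r a, J a -> J (r * a)).
Hypothesis binomial_in : forall w w', bounded N w -> bounded N w' ->
  perm_eq (beta w) (beta w') -> J (mmono R N w - mmono R N w').

Lemma monomial_map_kernel_sub p : meval v N p = 0 -> J p.
Proof.
have [s bs ->] := mpoly_monomial_expansion p; move=> ker_p.
have sortP := perm_sortP leq_total leq_trans anti_leq.
apply: (lincomb_in_binomial_ideal J0 JD JMl (mpolyC R N) (key := fun w => sort leq (beta w))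
  (Q := bounded N)) => // [w w' bw bw' /sortP|b]; first exact: binomial_in.
have [/hasP[x0 x0s /eqP <-]|hh] := boolP (has (fun x => sort leq (beta x.2) == b) s);
  last by rewrite big_hasC.
have := congr1 (mcoef (fun k => count_mem k (beta x0.2))) ker_p.
rewrite rmorph_sum mcoef_sum mcoef0; apply: etrans; rewrite big_mkcond /=.
apply: eq_big_seq => x xs; have bx := allP bs x xs.
rewrite rmorphM meval_C meval_mmono_beta // mcoef_monomial ?bounded_beta //.
rewrite all_count_iota_perm ?bounded_beta ?(allP bs x0) //.
by rewrite eq_sym; congr (if _ then _ else _); apply/eqP/sortP.
Qed.

End MonomialMapKernel.

Lemma seq_argmax (T : eqType) (f : T -> nat) (s : seq T) : s != [::] ->
  exists2 x, x \in s & forall y, y \in s -> (f y <= f x)%N.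
Proof.
elim: s => // a s IH _; have [->|/IH[x xs hx]] := eqVneq s [::].
  by exists a; rewrite ?mem_head // => y; rewrite inE => /eqP->.
have [le_ax|lt_xa] := leqP (f a) (f x).
  by exists x; rewrite ?inE ?xs ?orbT // => y; rewrite inE => /orP[/eqP->|/hx].
exists a; rewrite ?mem_head // => y; rewrite inE => /orP[/eqP->|/hx hy] //.
exact: leq_trans hy (ltnW lt_xa).
Qed.

Lemma perm_map_rem (T U : eqType) (f : T -> U) x s1 s2 : x \in s1 -> x \in s2 ->
  perm_eq (map f s1) (map f s2) -> perm_eq (map f (rem x s1)) (map f (rem x s2)).
Proof.
move=> x1 x2 h; rewrite -(perm_cons (f x)).
have e1 := perm_map f (perm_to_rem x1); have e2 := perm_map f (perm_to_rem x2).
by rewrite perm_sym in e1; exact: perm_trans e1 (perm_trans h e2).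
Qed.

(* Both [R1] and [R2] consist of the [size R1] smallest elements of the common multiset. *)
Lemma perm_eq_lower_parts (R1 C1 R2 C2 : seq nat) : size R1 = size R2 ->
  allrel leq R1 C1 -> allrel leq R2 C2 -> perm_eq (R1 ++ C1) (R2 ++ C2) ->
  perm_eq R1 R2.
Proof.
have sortP := perm_sortP leq_total leq_trans anti_leq.
have sort_cat R C : allrel leq R C -> sort leq (R ++ C) = sort leq R ++ sort leq C.
  move=> RC; have -> : sort leq (R ++ C) = sort leq (sort leq R ++ sort leq C).
    by apply/sortP; apply: perm_cat; rewrite perm_sym perm_sort.
  apply: (sorted_sort leq_trans).
  rewrite (sorted_pairwise leq_trans) pairwise_cat -!(sorted_pairwise leq_trans).
  rewrite !(sort_sorted leq_total) !andbT.
  by apply/allrelP => x y; rewrite !mem_sort => xR yC; exact: (allrelP RC).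
move=> hs h1 h2 /sortP; rewrite (sort_cat _ _ h1) (sort_cat _ _ h2) => /(congr1 (take (size R1))).
by rewrite take_size_cat ?size_sort // hs take_size_cat ?size_sort // => /sortP.
Qed.

Section Tableau.
Variables (K : fieldType) (lam mu : seq nat).
Hypotheses
  (lam_nonincr : forall i, (1 <= i < size lam)%N -> (at1 lam i.+1 <= at1 lam i)%N)
  (mu_nondecr : forall i, (1 <= i < size lam)%N -> (at1 mu i <= at1 mu i.+1)%N)
  (mu_ge : forall i, (1 <= i <= size lam)%N -> (i.-1 <= at1 mu i)%N).

Local Notation Tv := (Tvar K lam mu).
Local Notation inT := (inT lam mu).

Let rows := [pred i | (1 <= i <= size lam)%N].

Let rows_convex : {in rows &, forall i j k, (i < k < j)%N -> k \in rows}.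
Proof. by move=> i j /andP[i1 _] /andP[_ jn] k /andP[ik kj]; apply/andP; lia. Qed.

Lemma lam_antimono : {in rows &, {homo at1 lam : i k / (i <= k)%N >-> (k <= i)%N}}.
Proof.
apply: homo_leq_in rows_convex _ => // [y x z yx zy|i /andP[i1 _] /andP[_ i1n]].
  exact: leq_trans zy yx.
by apply: lam_nonincr; rewrite i1.
Qed.

Lemma mu_mono : {in rows &, {homo at1 mu : i k / (i <= k)%N}}.
Proof.
apply: homo_leq_in rows_convex _ => // [y x z|i /andP[i1 _] /andP[_ i1n]].
  exact: leq_trans.
by apply: mu_nondecr; rewrite i1.
Qed.

Lemma inTE i j : inT i j =
  [&& (1 <= i)%N, (i <= size lam)%N, (at1 mu i < j)%N & (j <= at1 lam i)%N].
Proof. by rewrite /Defs.inT -!andbA. Qed.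

Lemma inT_bounds i j : inT i j ->
  [/\ (1 <= i)%N, (i <= j)%N & (j <= at1 lam 1)%N].
Proof.
rewrite inTE => /and4P[i1 iN mj jl].
have hd : (i.-1 <= at1 mu i)%N by apply: mu_ge; rewrite i1 iN.
split => //; first by lia.
have oneR : 1%N \in rows by rewrite inE /= (leq_trans i1 iN).
have iR : i \in rows by rewrite inE i1 iN.
exact: leq_trans jl (lam_antimono oneR iR i1).
Qed.

Lemma inT_up i k j : inT k j -> (1 <= i <= k)%N -> inT i j.
Proof.
rewrite !inTE => /and4P[k1 kn mj jl] /andP[i1 ik].
have iR : i \in rows by rewrite inE i1 (leq_trans ik kn).
have kR : k \in rows by rewrite inE k1 kn.
have := mu_mono iR kR ik; have := lam_antimono iR kR ik.
rewrite i1 (leq_trans ik kn) /=; lia.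
Qed.

Lemma inT_exchange a b c d : (b < c)%N -> inT a b -> inT c d -> inT a c /\ inT b d.
Proof.
move=> bc h1 h2; have [a1 ab _] := inT_bounds h1; have [c1 cd _] := inT_bounds h2.
move: h1 h2; rewrite !inTE => /and4P[_ an m1 l1] /and4P[_ cn m2 l2].
have [aR bR cR] : [/\ a \in rows, b \in rows & c \in rows].
  by rewrite !inE; split; lia.
have := lam_antimono aR cR; have := lam_antimono bR cR; have := mu_mono bR cR.
move=> /(_ (ltnW bc)) hm /(_ (ltnW bc)) hlb /(_ (leq_trans ab (ltnW bc))) hla.
split; apply/and4P; split; lia.
Qed.

Definition tmono (L : seq (nat * nat)) : KT K lam mu := \prod_(p <- L) Tv p.1 p.2.

Lemma tmono_perm L1 L2 : perm_eq L1 L2 -> tmono L1 = tmono L2.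
Proof. by move=> h; rewrite /tmono (perm_big _ h). Qed.

Lemma tmono_cons p L : tmono (p :: L) = Tv p.1 p.2 * tmono L.
Proof. by rewrite /tmono big_cons. Qed.

Let inTp (p : nat * nat) := inT p.1 p.2.

Variable J : KT K lam mu -> Prop.
Hypotheses (J0 : J 0) (JD : forall a b, J a -> J b -> J (a + b))
  (JMl : forall r a, J a -> J (r * a)).

Lemma tmono_cancel x L1 L2 : x \in L1 -> x \in L2 ->
  J (tmono (rem x L1) - tmono (rem x L2)) -> J (tmono L1 - tmono L2).
Proof.
move=> x1 x2; rewrite (tmono_perm (perm_to_rem x1)) (tmono_perm (perm_to_rem x2)).
by rewrite !tmono_cons; apply: ideal_sub_mul.
Qed.

Hypothesis minor_in : forall i k j l, (i < k)%N -> (j < l)%N ->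
  inT i j -> inT i l -> inT k j -> inT k l -> J (Tv i j * Tv k l - Tv i l * Tv k j).
Hypothesis sym_minor_in : forall a b c d, (b < c)%N -> inT a b -> inT c d ->
  J (Tv a b * Tv c d - Tv a c * Tv b d).

Lemma minor_in_neq i k j l : (i < k)%N -> j != l ->
  inT i j -> inT i l -> inT k j -> inT k l -> J (Tv i j * Tv k l - Tv i l * Tv k j).
Proof.
move=> ik; case: ltngtP => // [jl|lj] _ hij hil hkj hkl; first exact: minor_in.
by rewrite -opprB; apply: (idealN JMl); apply: minor_in.
Qed.

(* Take a factor T_rc of the first one with [r] maximal.  If
   the second one lacks it, it contains factors T_rc' and T_r'c with [r' < r]; as
   the rows of the tableau shrink downwards, T_r'c' exists and a 2-minor trades
   T_rc' T_r'c for T_rc T_r'c'.  Then cancel T_rc and induct. *)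
Lemma tmono_rows_cols_binomial L1 L2 : all inTp L1 -> all inTp L2 ->
  perm_eq (map fst L1) (map fst L2) -> perm_eq (map snd L1) (map snd L2) ->
  J (tmono L1 - tmono L2).
Proof.
move: {2}(size L1) (leqnn (size L1)) => n.
elim: n L1 L2 => [|n IH] L1 L2 hsz a1 a2 p1 p2;
  (have [e1|ne1] := eqVneq L1 [::];
    first by move: p1 => /perm_size; rewrite e1 /= size_map => /esym/size0nil->; rewrite subrr);
  first by move: hsz; rewrite leqn0 size_eq0 (negPf ne1).
have cancel L2' x : all inTp L2' -> perm_eq (map fst L1) (map fst L2') ->
    perm_eq (map snd L1) (map snd L2') -> x \in L1 -> x \in L2' -> J (tmono L1 - tmono L2').
  move=> a2' p1' p2' x1 x2; apply: (tmono_cancel x1 x2); apply: IH.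
  - by rewrite size_rem // -ltnS (leq_trans _ hsz) // prednK // lt0n size_eq0.
  - by apply/allP => y /mem_rem; apply/allP.
  - by apply/allP => y /mem_rem; apply/allP.
  - exact: perm_map_rem.
  - exact: perm_map_rem.
have [[r c] rc1 rmax] := seq_argmax fst ne1.
have [rc2|rc2] := boolP ((r, c) \in L2); first exact: cancel rc1 rc2.
have /mapP[[r0 c'] rc'2 /= er] : r \in map fst L2 by rewrite -(perm_mem p1) (map_f fst rc1).
have /mapP[[r' c0] r'c2 /= ec] : c \in map snd L2 by rewrite -(perm_mem p2) (map_f snd rc1).
subst r0 c0.
have lt_r'r : (r' < r)%N.
  have : r' \in map fst L1 by rewrite (perm_mem p1) (map_f fst r'c2).
  case/mapP=> q /rmax le_qr er'; rewrite er' ltn_neqAle le_qr andbT -er'.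
  by apply: contraNneq rc2 => <-.
have neq_c'c : c' != c by apply: contraNneq rc2 => <-.
have rc'_rem : (r, c') \in rem (r', c) L2.
  by apply: rem_mem rc'2; apply: contraTneq lt_r'r => -[->]; rewrite ltnn.
set rest := rem (r, c') (rem (r', c) L2).
have e2 : perm_eq L2 ((r', c) :: (r, c') :: rest).
  by apply: perm_trans (perm_to_rem r'c2) _; rewrite perm_cons perm_to_rem.
have inT_rc : inT r c := allP a1 _ rc1.
have inT_r'c : inT r' c := allP a2 _ r'c2.
have inT_rc' : inT r c' := allP a2 _ rc'2.
have inT_r'c' : inT r' c'.
  by apply: inT_up inT_rc' _ => //; have [-> _ _] := inT_bounds inT_r'c; exact: ltnW.
set L2' := (r, c) :: (r', c') :: rest.
have a2' : all inTp L2'.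
  rewrite /= /inTp inT_rc inT_r'c' /=; apply/allP => y /mem_rem/mem_rem; exact: allP a2 y.
have -> : tmono L1 - tmono L2 = (tmono L1 - tmono L2') + (tmono L2' - tmono L2).
  by rewrite addrA subrK.
apply: JD.
  apply: (cancel L2' (r, c)) rc1 (mem_head _ _) => //.
    apply: perm_trans p1 _; apply: perm_trans (perm_map fst e2) _.
    by rewrite /L2' /= -[[:: r', r & _]]/([:: r'] ++ [:: r] ++ _) perm_catCA.
  by apply: perm_trans p2 (perm_trans (perm_map snd e2) _).
rewrite (tmono_perm e2) /L2' !tmono_cons /= !mulrA.
rewrite -!mulrBl mulrC; apply: JMl.
by rewrite [Tv r c * _]mulrC; apply: minor_in_neq.
Qed.


Definition content (L : seq (nat * nat)) := map fst L ++ map snd L.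

Lemma tmono_exchange L : all inTp L -> ~~ allrel leq (map fst L) (map snd L) ->
  exists L', [/\ all inTp L', size L' = size L, perm_eq (content L) (content L'),
    J (tmono L - tmono L') & (sumn (map fst L') < sumn (map fst L))%N].
Proof.
move=> aL; rewrite -has_predC => /hasP[_ /mapP[[c d] cdL ->]] /allPn[_ /mapP[[a b] abL ->]].
rewrite /= -ltnNge => bc.
have inT_ab : inT a b := allP aL _ abL.
have inT_cd : inT c d := allP aL _ cdL.
have ab_rem : (a, b) \in rem (c, d) L.
  apply: rem_mem abL; apply: contraTneq bc => -[_ ->]; rewrite -leqNgt.
  by have [] := inT_bounds inT_cd.
set rest := rem (a, b) (rem (c, d) L).
have e : perm_eq L ((c, d) :: (a, b) :: rest).
  by apply: perm_trans (perm_to_rem cdL) _; rewrite perm_cons perm_to_rem.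
have [inT_ac inT_bd] := inT_exchange bc inT_ab inT_cd.
exists ((a, c) :: (b, d) :: rest); split.
- rewrite /= /inTp inT_ac inT_bd; apply/allP => z /mem_rem/mem_rem; exact: allP aL z.
- by rewrite (perm_size e).
- apply: perm_trans (perm_cat (perm_map fst e) (perm_map snd e)) _.
  by apply/permP => P /=; rewrite !count_cat /=; ring.
- rewrite (tmono_perm e) !tmono_cons /=.
  have -> : Tv c d * (Tv a b * tmono rest) - Tv a c * (Tv b d * tmono rest) =
    tmono rest * (Tv a b * Tv c d - Tv a c * Tv b d) by ring.
  exact/JMl/sym_minor_in.
- by rewrite (perm_sumn (perm_map fst e)) /= addnCA ltn_add2r.
Qed.

Lemma tmono_normalize L : all inTp L -> exists L',
  [/\ all inTp L', size L' = size L, perm_eq (content L) (content L'),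
      allrel leq (map fst L') (map snd L') & J (tmono L - tmono L')].
Proof.
move: {2}(sumn (map fst L)) (leqnn (sumn (map fst L))) => n.
elim: n L => [|n IH] L hsum aL;
  (have [sorted_L|] := boolP (allrel leq (map fst L) (map snd L));
     first by exists L; split; rewrite ?subrr);
  move=> /(tmono_exchange aL) [L1 [a1 s1 c1 j1 lt1]].
  by move: (leq_trans lt1 hsum).
have [L' [a' s' c' r' j']] := IH L1 (leq_trans lt1 hsum) a1.
exists L'; split => //; [by rewrite s' s1 | exact: perm_trans c1 c' |].
exact: (ideal_sub_trans JD j1 j').
Qed.

(* Normalize both monomials so that all row indices lie below all column indices;
   then their row multisets are the smallest halves of the common content and agree,
   and so do the column multisets. *)
Lemma tmono_content_binomial L1 L2 : all inTp L1 -> all inTp L2 ->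
  perm_eq (content L1) (content L2) -> J (tmono L1 - tmono L2).
Proof.
move=> a1 a2 c12.
have [L1' [a1' s1 c1 r1 j1]] := tmono_normalize a1.
have [L2' [a2' s2 c2 r2 j2]] := tmono_normalize a2.
have c12' : perm_eq (content L1') (content L2').
  by rewrite perm_sym in c1; apply: perm_trans c1 (perm_trans c12 c2).
have s12 : size L1 = size L2.
  by move: (perm_size c12); rewrite !size_cat !size_map !addnn => /(congr1 half); rewrite !doubleK.
have rows12 : perm_eq (map fst L1') (map fst L2').
  by apply: perm_eq_lower_parts r1 r2 c12'; rewrite !size_map s1 s2.
have cols12 : perm_eq (map snd L1') (map snd L2').
  by rewrite -(perm_cat2l (map fst L1')); apply: perm_trans c12' _; rewrite perm_cat2r perm_sym.
apply: (ideal_sub_trans JD j1).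
apply: (ideal_sub_trans JD (tmono_rows_cols_binomial a1' a2' rows12 cols12)).
by rewrite -opprB; apply: idealN.
Qed.

End Tableau.

Section KernelDescription.
Variables (K : fieldType) (lam mu : seq nat).
Hypotheses
  (lam_nonincr : forall i, (1 <= i < size lam)%N -> (at1 lam i.+1 <= at1 lam i)%N)
  (mu_nondecr : forall i, (1 <= i < size lam)%N -> (at1 mu i <= at1 mu i.+1)%N)
  (mu_ge : forall i, (1 <= i <= size lam)%N -> (i.-1 <= at1 mu i)%N).

Local Notation TL := (Tlist lam mu).
Local Notation N := (size (Tlist lam mu)).
Local Notation Tv := (Tvar K lam mu).
Local Notation inT := (inT lam mu).
Local Notation m := (at1 lam 1).

Definition pos k := nth (0, 0)%N TL k.

Lemma mem_Tlist i j : ((i, j) \in TL) = inT i j.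
Proof.
rewrite /Tlist /Defs.inT; apply/allpairsPdep/idP.
  by move=> [x [y [hx hy [-> ->]]]]; move: hx hy; rewrite !mem_iota; lia.
by move=> /andP[h1 h2]; exists i, j; rewrite !mem_iota; split => //; lia.
Qed.

Lemma uniq_Tlist : uniq TL.
Proof.
apply: allpairs_uniq_dep => [|x _|[x1 y1] [x2 y2] _ _ /= [-> ->]] //; exact: iota_uniq.
Qed.

Lemma inT_pos k : (k < N)%N -> inT (pos k).1 (pos k).2.
Proof. by move=> kN; rewrite -mem_Tlist -surjective_pairing mem_nth. Qed.

Lemma pos_index i j : inT i j -> pos (index (i, j) TL) = (i, j).
Proof. by rewrite -mem_Tlist => h; rewrite /pos nth_index. Qed.

Lemma mmono_tmono w : bounded N w -> mmono K N w = tmono K lam mu (map pos w).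
Proof.
elim: w => [|k w IH] /=; first by rewrite /mmono /tmono !big_nil.
move=> /andP[kN bw]; rewrite /mmono big_cons -/(mmono _ _ _) IH // tmono_cons.
by rewrite /Tvar -surjective_pairing index_uniq ?uniq_Tlist.
Qed.

Lemma all_inT_pos w : bounded N w -> all (fun p => inT p.1 p.2) (map pos w).
Proof. by move=> /allP bw; rewrite all_map; apply/allP => k /bw /inT_pos. Qed.

(* Variables x_1, ..., x_m and y_j := x_(m + 1 + j) of the target ring; index 0 is unused. *)
Let shift := m.+1.
Let M := (shift + shift)%N.

Definition imgT k := [:: (pos k).1; shift + (pos k).2]%N.
Definition imgS k := [:: (pos k).1; (pos k).2].

Lemma bounded_img w : bounded N w ->
  bounded M (flatten (map imgT w)) /\ bounded M (flatten (map imgS w)).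
Proof.
elim: w => //= k w IH /andP[kN /IH[bT bS]]; move: bT bS; rewrite /bounded /= => -> ->.
by have [] := inT_bounds lam_nonincr mu_ge (inT_pos kN); rewrite /M /shift /=; lia.
Qed.

Lemma imgT_rows_cols w : bounded N w ->
  [/\ filter (fun x => x < shift)%N (flatten (map imgT w)) = map fst (map pos w) &
      map (subn^~ shift) (filter (fun x => ~~ (x < shift))%N (flatten (map imgT w)))
        = map snd (map pos w)].
Proof.
elim: w => //= k w IH /andP[kN /IH[rows cols]].
have [_ le_ij le_jm] := inT_bounds lam_nonincr mu_ge (inT_pos kN).
have -> : ((pos k).1 < shift)%N by rewrite /shift; lia.
have -> : (shift + (pos k).2 < shift)%N = false by lia.
by rewrite /= rows cols addKn.
Qed.

Lemma imgS_content w : perm_eq (flatten (map imgS w)) (content (map pos w)).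
Proof.
elim: w => //= k w IH; apply/permP => P.
by move/permP: IH => /(_ P); rewrite /content /= !count_cat /=; lia.
Qed.

Let phiT := meval (fun k => mmono K M (imgT k)) N.
Let phiS := meval (fun k => mmono K M (imgS k)) N.

Lemma phiT_Tvar i j : inT i j -> phiT (Tv i j) = mvar K M i * mvar K M (shift + j).
Proof.
move=> h; rewrite /phiT /Tvar meval_var ?index_mem ?mem_Tlist // /imgT pos_index //.
by rewrite /mmono !big_cons big_nil mulr1.
Qed.

Lemma phiS_Tvar i j : inT i j -> phiS (Tv i j) = mvar K M i * mvar K M j.
Proof.
move=> h; rewrite /phiS /Tvar meval_var ?index_mem ?mem_Tlist // /imgS pos_index //.
by rewrite /mmono !big_cons big_nil mulr1.
Qed.

Lemma I2T_kernel p : I2T K lam mu p <-> phiT p = 0.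
Proof.
split.
  move=> [s [minors ->]]; rewrite rmorph_sum big1_seq // => x /andP[_ xs].
  have [i [k [j [l [[_ _ _ _ /and4P[t1 t2 t3 t4]] ->]]]]] := minors x xs.
  by rewrite rmorphM rmorphB !rmorphM !phiT_Tvar //; ring.
rewrite /phiT; apply: (monomial_map_kernel_sub (beta := fun w => flatten (map imgT w))
  _ _ (@ideal_gen0 _ _) (@ideal_genD _ _) (@ideal_genMl _ _)) => [w bw|w /bounded_img[]//|].
  exact: meval_mmono_flatten.
move=> w w' bw bw' img_ww'; rewrite !mmono_tmono //.
have [rows cols] := imgT_rows_cols bw; have [rows' cols'] := imgT_rows_cols bw'.
apply: (tmono_rows_cols_binomial lam_nonincr mu_nondecr mu_ge
  (@ideal_gen0 _ _) (@ideal_genD _ _) (@ideal_genMl _ _)); rewrite ?all_inT_pos //.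
- move=> i k j l ik jl t1 t2 t3 t4; apply: ideal_gen_mem.
  have [i1 ij _] := inT_bounds lam_nonincr mu_ge t1.
  have [_ kj _] := inT_bounds lam_nonincr mu_ge t3.
  have [_ _ lm] := inT_bounds lam_nonincr mu_ge t4.
  by exists i, k, j, l; split => //; split; rewrite ?t1 ?t2 ?t3 ?t4 //; lia.
- by rewrite -rows -rows'; apply: perm_filter.
- by rewrite -cols -cols'; apply/perm_map/perm_filter.
Qed.

Lemma Sentry_inT i j : inT i j -> Sentry K lam mu i j = Tv i j.
Proof. by rewrite /Sentry => ->. Qed.

Lemma Sentry_inT_tr i j : inT i j -> Sentry K lam mu j i = Tv i j.
Proof.
rewrite /Sentry => tij; case: ifPn => // tji.
have [_ le_ij _] := inT_bounds lam_nonincr mu_ge tij.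
have [_ le_ji _] := inT_bounds lam_nonincr mu_ge tji.
by have -> : j = i by apply/eqP; rewrite eqn_leq le_ij le_ji.
Qed.

Lemma phiS_Sentry i j : inS lam mu i j -> phiS (Sentry K lam mu i j) = mvar K M i * mvar K M j.
Proof.
by case/orP => [/[dup] /Sentry_inT -> /phiS_Tvar|/[dup] /Sentry_inT_tr -> /phiS_Tvar ->] //;
  rewrite mulrC.
Qed.

Lemma I2S_kernel p : I2S K lam mu p <-> phiS p = 0.
Proof.
split.
  move=> [s [minors ->]]; rewrite rmorph_sum big1_seq // => x /andP[_ xs].
  have [i [k [j [l [[_ _ _ _ /and4P[t1 t2 t3 t4]] ->]]]]] := minors x xs.
  by rewrite rmorphM rmorphB !rmorphM !phiS_Sentry //; ring.
rewrite /phiS; apply: (monomial_map_kernel_sub (beta := fun w => flatten (map imgS w))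
  _ _ (@ideal_gen0 _ _) (@ideal_genD _ _) (@ideal_genMl _ _)) => [w bw|w /bounded_img[]//|].
  exact: meval_mmono_flatten.
move=> w w' bw bw' img_ww'; rewrite !mmono_tmono //.
apply: (tmono_content_binomial lam_nonincr mu_nondecr mu_ge
  (@ideal_gen0 _ _) (@ideal_genD _ _) (@ideal_genMl _ _)); rewrite ?all_inT_pos //.
- move=> i k j l ik jl t1 t2 t3 t4; apply: ideal_gen_mem.
  have [i1 ij _] := inT_bounds lam_nonincr mu_ge t1.
  have [_ kj _] := inT_bounds lam_nonincr mu_ge t3.
  have [_ _ lm] := inT_bounds lam_nonincr mu_ge t4.
  exists i, k, j, l; rewrite !Sentry_inT //; split => //.
  by split; rewrite /inS ?t1 ?t2 ?t3 ?t4 //; lia.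
- move=> a b c d bc tab tcd; apply: ideal_gen_mem.
  have [tac tbd] := inT_exchange lam_nonincr mu_nondecr mu_ge bc tab tcd.
  have [a1 ab _] := inT_bounds lam_nonincr mu_ge tab.
  have [_ cd dm] := inT_bounds lam_nonincr mu_ge tcd.
  exists a, d, b, c; rewrite (Sentry_inT tab) (Sentry_inT tac).
  rewrite (Sentry_inT_tr tbd) (Sentry_inT_tr tcd); split => //.
  by split; rewrite /inS ?tab ?tac ?tbd ?tcd ?orbT //; lia.
- have := imgS_content w; rewrite perm_sym => /perm_trans; apply.
  exact: perm_trans img_ww' (imgS_content w').
Qed.

End KernelDescription.

Theorem proposition3p5 (K : fieldType) (lam mu : seq nat) :
  (1 <= size lam)%N ->
  size mu = size lam ->
  (forall i, (1 <= i <= size lam)%N -> (0 < at1 lam i)%N) ->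
  (forall i, (1 <= i < size lam)%N -> (at1 lam i.+1 <= at1 lam i)%N) ->
  (forall i, (1 <= i < size lam)%N -> (at1 mu i <= at1 mu i.+1)%N) ->
  (at1 mu (size lam) < at1 lam (size lam))%N ->
  (forall i, (1 <= i <= size lam)%N -> (i.-1 <= at1 mu i)%N) ->
  prime_ideal (I2T K lam mu) /\ prime_ideal (I2S K lam mu).
Proof.
move=> _ _ _ lam_nonincr mu_nondecr _ mu_ge.
split.
  exact: (prime_ideal_kernel (I2T_kernel lam_nonincr mu_nondecr mu_ge)).
exact: (prime_ideal_kernel (I2S_kernel lam_nonincr mu_nondecr mu_ge)).
Qed.
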